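(* Let $F_2$ be the free group on $\{x,y\}$ and let $\alpha$ be a Whitehead automorphism of $F_2$ of type (W2). Then exactly one of $\alpha \equiv 1$, $\alpha \equiv (\{x\}, y)$, $\alpha \equiv (\{x\}, y^{-1})$, $\alpha \equiv (\{y\}, x)$, $\alpha \equiv (\{y\}, x^{-1})$ holds.
   Context: Let $\Sigma=\{x,y\}$. A Whitehead automorphism of type (W2) is an automorphism $(S,a)$ determined by a set $S \subset \Sigma^{\pm 1}$ and a letter $a \in \Sigma^{\pm 1}$ with $a, a^{-1} \notin S$, acting on letters $c \in \Sigma^{\pm1}$ by: $c \mapsto ca$ if $c \in S$ and $c^{-1} \notin S$; $c \mapsto a^{-1}ca$ if $c, c^{-1} \in S$; $c \mapsto c$ if $c, c^{-1} \notin S$. A cyclic word is the set of all cyclic permutations of a cyclically reduced word; an automorphism acts on cyclic words by applying it to a representative and cyclically reducing. For automorphisms $\phi,\psi$, $\phi \equiv \psi$ means $\phi(w) = \psi(w)$ for every cyclic word $w$ in $F_2$. *)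

From mathcomp Require Import all_boot.
Set Implicit Arguments. Unset Strict Implicit. Unset Printing Implicit Defensive.

(* A letter of Sigma^{+-1}: (generator, inverted?) ; generator false = x, true = y *)
Definition letter : finType := (bool * bool)%type.
Definition lx : letter := (false, false).
Definition lxi : letter := (false, true).
Definition ly : letter := (true, false).
Definition lyi : letter := (true, true).
Definition linv (c : letter) : letter := (c.1, ~~ c.2).

Definition red (w : seq letter) : seq letter :=
  foldr (fun c acc => match acc with
                      | d :: t => if d == linv c then t else c :: acc
                      | [::] => [:: c] end) [::] w.

Definition reduced (w : seq letter) : bool := red w == w.

Definition cyc_reduced (w : seq letter) : bool :=
  reduced w && (if w is c :: t then last c t != linv c else true).

Definition cstrip (w : seq letter) : seq letter :=
  if w is c :: t then
    if (1 <= size t) && (last c t == linv c) then take (size t).-1 t else w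
  else w.

Definition cycred (w : seq letter) : seq letter :=
  let r := red w in iter (size r) cstrip r.

Definition endo := letter -> seq letter.

Definition cyc_image (f : endo) (w : seq letter) : seq letter :=
  cycred (flatten (map f w)).

(* equality of cyclic words = the representatives are cyclic permutations *)
Definition cyc_eq (u v : seq letter) : Prop := exists n, rot n u = v.

Definition aut_equiv (f g : endo) : Prop :=
  forall w, cyc_reduced w -> cyc_eq (cyc_image f w) (cyc_image g w).

Definition id_aut : endo := fun c => [:: c].

(* Whitehead automorphism (S, a) of type (W2); the case c \notin S,
   c^{-1} \in S is forced by the homomorphism property: c ↦ a^{-1} c *)
Definition whitehead2 (S : {set letter}) (a : letter) : endo := fun c =>
  if c \in S then
    (if linv c \in S then [:: linv a; c; a] else [:: c; a])
  else
    (if linv c \in S then [:: linv a; c] else [:: c]).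

Definition is_W2 (S : {set letter}) (a : letter) : Prop :=
  a \notin S /\ linv a \notin S.

Definition exactly_one5 (P1 P2 P3 P4 P5 : Prop) : Prop :=
  (P1 /\ ~ P2 /\ ~ P3 /\ ~ P4 /\ ~ P5) \/
  (~ P1 /\ P2 /\ ~ P3 /\ ~ P4 /\ ~ P5) \/
  (~ P1 /\ ~ P2 /\ P3 /\ ~ P4 /\ ~ P5) \/
  (~ P1 /\ ~ P2 /\ ~ P3 /\ P4 /\ ~ P5) \/
  (~ P1 /\ ~ P2 /\ ~ P3 /\ ~ P4 /\ P5).

From mathcomp Require Import all_boot.

(* As a and a^-1 are not in S, S is a subset of {b, b^-1} for the other
   generator b.  For S = {} the automorphism is the identity, for S = {b, b^-1}
   it is conjugation by a, and S = {b} is one of the four listed automorphisms.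
   In general (S, a) and (T, a^-1), with T the complement of S among the letters
   other than a^{+-1}, differ by conjugation by a; so ({b^-1}, a) is equivalent
   to ({b}, a^-1).  Conjugation does not change cyclic words, because the cyclic
   core of the reduced form of c^-1 r c is a rotation of the cyclic core of r.
   Finally, the five candidates are pairwise inequivalent: they send the cyclic
   word xy to xy, xy^2, x, xyx and y, no two of which are permutations of
   each other. *)

Set Implicit Arguments.
Unset Strict Implicit.
Unset Printing Implicit Defensive.

Lemma linvK : involutive linv.
Proof. by case=> g s; rewrite /linv negbK. Qed.

Lemma linv_neq c : c != linv c.
Proof. by case: c => g [] /=; rewrite /linv xpair_eqE andbF. Qed.

Definition push (c : letter) (r : seq letter) : seq letter :=
  if r is d :: t then (if d == linv c then t else c :: r) else [:: c].

Lemma red_cons c w : red (c :: w) = push c (red w).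
Proof. by []. Qed.

Lemma red_cat u v : red (u ++ v) = foldr push (red v) u.
Proof. exact: foldr_cat. Qed.

Definition nocancel (c d : letter) : bool := d != linv c.

Definition freely_reduced : seq letter -> bool := sorted nocancel.

Lemma nocancelC c d : nocancel c d = nocancel d c.
Proof. by rewrite /nocancel eq_sym (inv_eq linvK). Qed.

Lemma push_reduced c r : freely_reduced r -> freely_reduced (push c r).
Proof.
case: r => [|d t] //= rr; case: ifP => [_|dc]; first exact: path_sorted rr.
by rewrite /freely_reduced /= /nocancel dc.
Qed.

Lemma foldr_push_reduced r u : freely_reduced r -> freely_reduced (foldr push r u).
Proof. by move=> rr; elim: u => //= c u; apply: push_reduced. Qed.

Lemma red_reduced w : freely_reduced (red w).
Proof. exact: foldr_push_reduced. Qed.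

Lemma push_linvK c r : freely_reduced r -> push c (push (linv c) r) = r.
Proof.
case: r => [|d t] /=; first by rewrite eqxx.
rewrite linvK; have [->|dc] := eqVneq d c; last by rewrite /= eqxx.
by case: t => [|e t] //= /andP[ec _]; rewrite (negbTE ec).
Qed.

Lemma red_id r : freely_reduced r -> red r = r.
Proof.
elim: r => // c r IHr cr; rewrite red_cons IHr; last exact: path_sorted cr.
by case: r cr {IHr} => //= d t /andP[dc _]; rewrite (negbTE dc).
Qed.

Lemma foldr_push_red r u : freely_reduced r -> foldr push r (red u) = foldr push r u.
Proof.
move=> rr; elim: u => //= c u <-; case: (red u) => [|d t] //=.
have [-> /=|//] := eqVneq d (linv c).
by rewrite push_linvK ?foldr_push_reduced.
Qed.

Lemma red_cat_red u v s : red (u ++ red v ++ s) = red (u ++ v ++ s).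
Proof. by rewrite !red_cat foldr_push_red ?red_reduced. Qed.

Lemma red_cancel u b v : red (u ++ b :: linv b :: v) = red (u ++ v).
Proof. by rewrite !red_cat !red_cons push_linvK ?red_reduced. Qed.

Definition core (r : seq letter) : seq letter := iter (size r) cstrip r.

Lemma cycredE w : cycred w = core (red w).
Proof. by []. Qed.

Lemma cstrip_cons_id c t : last c t != linv c -> cstrip (c :: t) = c :: t.
Proof. by move=> /negbTE /= ->; rewrite andbF. Qed.

Lemma cstrip_conj c t : cstrip (c :: rcons t (linv c)) = t.
Proof.
by rewrite /= size_rcons last_rcons eqxx -cats1 take_size_cat.
Qed.

Lemma cstrip_size r : cstrip r = r \/ size r = (size (cstrip r)).+2.
Proof.
case: r => [|c t] /=; first by left.
case: ifP => [/andP[t_gt0 _]|]; last by left.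
by right; rewrite size_take ltn_predL t_gt0 prednK.
Qed.

Lemma iter_cstrip_id n r : cstrip r = r -> iter n cstrip r = r.
Proof. by move=> rK; elim: n => //= n ->. Qed.

Lemma cstrip_iter_stable n r : size r <= n ->
  cstrip (iter n cstrip r) = iter n cstrip r.
Proof.
elim: n r => [|n IHn] r.
  by rewrite leqn0 => /nilP ->.
case: (cstrip_size r) => [rK _|sz]; first by rewrite !iter_cstrip_id.
by rewrite iterSr sz ltnS => /ltnW; apply: IHn.
Qed.

Lemma core_cstrip r : core r = core (cstrip r).
Proof.
case: (cstrip_size r) => [-> //|sz].
by rewrite /core sz iterSr iterS cstrip_iter_stable.
Qed.

Lemma core_id r : cstrip r = r -> core r = r.
Proof. exact: iter_cstrip_id. Qed.

Lemma core_conj c t : core (c :: rcons t (linv c)) = core t.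
Proof. by rewrite core_cstrip cstrip_conj. Qed.

Lemma freely_reduced_rcons r c :
  freely_reduced (rcons r c) -> freely_reduced r.
Proof. by case: r => //= d t; rewrite /freely_reduced /= rcons_path => /andP[]. Qed.

Lemma freely_reduced_rcons2 r c d : freely_reduced (rcons r c) -> nocancel c d ->
  freely_reduced (rcons (rcons r c) d).
Proof.
case: r => [|e t]; rewrite /freely_reduced /= ?rcons_path ?last_rcons ?andbT //.
by move=> -> ->.
Qed.

Lemma core_red_conj_nocancel r b : freely_reduced (rcons r b) ->
  cyc_eq (core (red (linv b :: r ++ [:: b]))) (core r).
Proof.
move=> rb; rewrite red_cons cats1 red_id //.
case: r rb => [|c t] rb; first by exists 0; rewrite /= linvK eqxx.
rewrite rcons_cons /= linvK; case: eqVneq rb => [-> | cb] rb; last first.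
  by exists 0; rewrite rot0 -(core_conj (linv b) (c :: t)) linvK.
have bt : last b t != linv b.
  by move: rb; rewrite /freely_reduced /= rcons_path nocancelC => /andP[_].
have tb : cstrip (rcons t b) = rcons t b.
  case: t rb {bt} => [|d t] // /andP[bd _].
  by apply: cstrip_cons_id; rewrite last_rcons; move: bd; rewrite nocancelC.
exists (size (rcons t b) - 1).
by rewrite (core_id tb) (core_id (cstrip_cons_id bt)) -rotr1_rcons.
Qed.

Lemma core_red_conj_cancel m b : freely_reduced (rcons m (linv b)) ->
  cyc_eq (core (red (linv b :: rcons m (linv b) ++ [:: b]))) (core (rcons m (linv b))).
Proof.
move=> mb; have m_red := freely_reduced_rcons mb.
have -> : linv b :: rcons m (linv b) ++ [:: b] = (linv b :: m) ++ linv b :: linv (linv b) :: [::].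
  by rewrite linvK -cats1 -catA.
rewrite red_cancel cats0 red_cons red_id //.
case: m mb {m_red} => [|c t] mb; first by exists 0.
rewrite /= linvK; case: eqVneq mb => [-> | cb] mb.
  by exists 0; rewrite rot0 core_conj.
have tb : last c t != b.
  by move: mb; rewrite /freely_reduced /= rcons_path /nocancel (can_eq linvK) eq_sym => /andP[].
have bc : last c (rcons t (linv b)) != linv c by rewrite last_rcons (can_eq linvK) eq_sym.
rewrite (core_id (cstrip_cons_id bc)) core_id; first by exists 1; rewrite rot1_cons.
by apply: cstrip_cons_id; rewrite linvK.
Qed.

Lemma core_red_conj r b : freely_reduced r ->
  cyc_eq (core (red (linv b :: r ++ [:: b]))) (core r).
Proof.
case/lastP: r => [|m d] md; first by exists 0; rewrite /= linvK eqxx.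
case: (eqVneq d (linv b)) md => [-> | db] md; first exact: core_red_conj_cancel.
by apply/core_red_conj_nocancel/freely_reduced_rcons2; rewrite // nocancelC.
Qed.

Lemma red_catl u v : red (red u ++ v) = red (u ++ v).
Proof. exact: (red_cat_red [::]). Qed.

Lemma red_catr u v : red (u ++ red v) = red (u ++ v).
Proof. by have := red_cat_red u v [::]; rewrite !cats0. Qed.

Lemma red_conj_flatten (f g : endo) b :
    (forall c, red (f c) = red (linv b :: g c ++ [:: b])) ->
  forall w, red (flatten (map f w)) = red (linv b :: flatten (map g w) ++ [:: b]).
Proof.
move=> fg; elim=> [|c w IHw] /=; first by rewrite linvK eqxx.
rewrite -(red_catl (f c)) -red_catr fg IHw red_catl red_catr.
have -> : (linv b :: g c ++ [:: b]) ++ linv b :: flatten (map g w) ++ [:: b]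
        = (linv b :: g c) ++ b :: linv b :: flatten (map g w) ++ [:: b].
  by rewrite /= -catA.
by rewrite red_cancel /= catA.
Qed.

Lemma aut_equiv_conj (f g : endo) b :
  (forall c, red (f c) = red (linv b :: g c ++ [:: b])) -> aut_equiv f g.
Proof.
move=> fg w _; rewrite /cyc_image !cycredE (red_conj_flatten fg).
by rewrite -(red_cat_red [:: linv b]); apply/core_red_conj/red_reduced.
Qed.

Lemma aut_equiv_refl f : aut_equiv f f.
Proof. by move=> w _; exists 0; rewrite rot0. Qed.

Lemma eq_aut_equivr f g h : g =1 h -> aut_equiv f g -> aut_equiv f h.
Proof. by move=> gh fg w /fg; rewrite /cyc_image (eq_map gh). Qed.

Lemma cyc_eq_perm u v : cyc_eq u v -> perm_eq u v.
Proof. by case=> n <-; rewrite perm_sym perm_rot. Qed.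

Lemma aut_equiv_exclusive f g h w : cyc_reduced w ->
  ~~ perm_eq (cyc_image g w) (cyc_image h w) -> aut_equiv f g -> ~ aut_equiv f h.
Proof.
move=> cw gh /(_ w cw)/cyc_eq_perm fg /(_ w cw)/cyc_eq_perm fh.
by case/negP: gh; rewrite perm_sym in fg; apply: perm_trans fg fh.
Qed.

Lemma red_cancel_head b v : red (linv b :: b :: v) = red v.
Proof. by rewrite -{2}(linvK b) (red_cancel [::]). Qed.

Lemma red_cancel_tail u b : red (u ++ [:: linv b; b]) = red u.
Proof. by rewrite -{2}(linvK b) red_cancel cats0. Qed.

Lemma whitehead2_set0 a : whitehead2 set0 a =1 id_aut.
Proof. by move=> c; rewrite /whitehead2 !inE. Qed.

Lemma whitehead2_compl (S T : {set letter}) a :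
    a \notin S -> linv a \notin S -> a \notin T -> linv a \notin T ->
    (forall c, c != a -> c != linv a -> (c \in T) = (c \notin S)) ->
  aut_equiv (whitehead2 S a) (whitehead2 T (linv a)).
Proof.
move=> /negbTE aS /negbTE aS' /negbTE aT /negbTE aT' TS.
apply: (aut_equiv_conj (b := a)) => c; rewrite /whitehead2 linvK.
have [-> | ca] := eqVneq c a; first by rewrite aS aS' aT aT' red_cancel_head.
have [-> | ca'] := eqVneq c (linv a).
  by rewrite linvK aS aS' aT aT' (red_cancel_tail [:: linv a]).
have ca2 : linv c != a by rewrite (inv_eq linvK).
have ca2' : linv c != linv a by rewrite (can_eq linvK).
rewrite !TS //; case: (c \in S); case: (linv c \in S); cbn [negb].
- by [].
- by rewrite red_cancel_head.
- by rewrite (red_cancel_tail [:: linv a; c]).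
- by rewrite red_cancel_head (red_cancel_tail [:: c]).
Qed.

Lemma other_letter a b c : b.1 != a.1 -> c != a -> c != linv a -> c = b \/ c = linv b.
Proof.
by case: a b c => [[] []] [[] []] [[] []]; rewrite /linv /= ?eqxx //; auto.
Qed.

Lemma W2_rank2_sets S a b : is_W2 S a -> b.1 != a.1 ->
  [\/ S = set0, S = [set b; linv b], S = [set b] | S = [set linv b]].
Proof.
move=> [aS aS'] ba.
have Sb c : c \in S -> c = b \/ c = linv b.
  by move=> cS; apply: (other_letter ba); apply: contraTneq cS => ->.
have [bS'|bS'] := boolP (linv b \in S); last first.
  have : S \subset [set b].
    apply/subsetP => c cS; rewrite inE.
    by case: (Sb c cS) => cb; [rewrite cb eqxx | move: bS'; rewrite -cb cS].
  by rewrite subset1 => /orP[] /eqP ->; [apply: Or43 | apply: Or41].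
have [bS|bS] := boolP (b \in S).
  apply: Or42; apply/eqP; rewrite eqEsubset; apply/andP; split; apply/subsetP => c.
    by move/Sb => [] ->; rewrite !inE eqxx ?orbT.
  by rewrite !inE => /orP[] /eqP ->.
have : S \subset [set linv b].
  apply/subsetP => c cS; rewrite inE.
  by case: (Sb c cS) => cb; [move: bS; rewrite -cb cS | rewrite cb eqxx].
by rewrite subset1 => /orP[] /eqP ->; [apply: Or44 | apply: Or41].
Qed.

Lemma whitehead2_rank2_target f a :
    aut_equiv f (whitehead2 [set (~~ a.1, false)] a) ->
  aut_equiv f (whitehead2 [set lx] ly) \/ aut_equiv f (whitehead2 [set lx] lyi) \/
  aut_equiv f (whitehead2 [set ly] lx) \/ aut_equiv f (whitehead2 [set ly] lxi).
Proof. by case: a => -[] []; auto. Qed.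

Lemma whitehead2_rank2_classes S a : is_W2 S a ->
  let f := whitehead2 S a in
  aut_equiv f id_aut \/
  aut_equiv f (whitehead2 [set lx] ly) \/ aut_equiv f (whitehead2 [set lx] lyi) \/
  aut_equiv f (whitehead2 [set ly] lx) \/ aut_equiv f (whitehead2 [set ly] lxi).
Proof.
move=> W f; pose b : letter := (~~ a.1, false).
have ba : b.1 != a.1 by rewrite /b /=; case: (a.1).
have notb x : x.1 = a.1 -> (x == b) = false /\ (x == linv b) = false.
  by move=> xa; split; apply/eqP => /(congr1 fst); rewrite /b /= xa; case: (a.1).
have [ab alb] := notb a erefl; have [lab lalb] := notb (linv a) erefl.
have bb : (b == linv b) = false := negbTE (linv_neq b).
rewrite /f; case: (W2_rank2_sets W ba) => ->.
- by left; apply: eq_aut_equivr (whitehead2_set0 a) (aut_equiv_refl _).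
- left; apply: eq_aut_equivr (whitehead2_set0 (linv a)) _.
  apply: whitehead2_compl; rewrite ?inE ?ab ?alb ?lab ?lalb // => c ca ca'.
  by case: (other_letter ba ca ca') => ->; rewrite !inE eqxx ?orbT.
- by right; apply/whitehead2_rank2_target/aut_equiv_refl.
- right; apply: (@whitehead2_rank2_target _ (linv a)).
  apply: whitehead2_compl; rewrite ?inE ?ab ?alb ?lab ?lalb // => c ca ca'.
  by case: (other_letter ba ca ca') => ->; rewrite !inE eqxx ?bb // eq_sym bb.
Qed.

Theorem lemma2p1 (S : {set letter}) (a : letter) :
  is_W2 S a ->
  exactly_one5
    (aut_equiv (whitehead2 S a) id_aut)
    (aut_equiv (whitehead2 S a) (whitehead2 [set lx] ly))
    (aut_equiv (whitehead2 S a) (whitehead2 [set lx] lyi))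
    (aut_equiv (whitehead2 S a) (whitehead2 [set ly] lx))
    (aut_equiv (whitehead2 S a) (whitehead2 [set ly] lxi)).
Proof.
move=> W.
have excl g h : ~~ perm_eq (cyc_image g [:: lx; ly]) (cyc_image h [:: lx; ly]) ->
    aut_equiv (whitehead2 S a) g -> ~ aut_equiv (whitehead2 S a) h.
  exact: aut_equiv_exclusive.
case: (whitehead2_rank2_classes W) => [H|[H|[H|[H|H]]]];
  [left | right; left | do 2 right; left | do 3 right; left | do 4 right];
  do !split => //; apply: (excl _ _ _ H); by rewrite /cyc_image /= /whitehead2 !inE.
Qed.
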